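(* Let $N\ge 2$, $d\ge1$. Let $\bar{\mathscr L}\in\mathbb{R}^{N\times N}$ be a real symmetric matrix with zero row sums whose eigenvalues are $0$ (simple) and $\gamma$ with multiplicity $N-1$. Let $\mathscr B\in\mathbb{R}^{N\times N}$ be symmetric with all row sums equal to $e$. Let $\epsilon,\lambda,d^{[1]}\in\mathbb{R}$, let $t\mapsto \mathbf x_s(t),\mathbf y_s(t)\in\mathbb{R}^d$ be given, and let $F_1,F_2:\mathbb{R}^d\to\mathbb{R}^d$, $G^{[1]},G^{[2]},H_1,H_2:\mathbb{R}^d\times\mathbb{R}^d\to\mathbb{R}^d$ be continuously differentiable. Write $J$ (resp. $D$) for the Jacobian with respect to the first (resp. second) argument, all evaluated along $(\mathbf x_s,\mathbf x_s)$, $(\mathbf y_s,\mathbf y_s)$, $(\mathbf x_s,\mathbf y_s)$ or $(\mathbf y_s,\mathbf x_s)$ as appropriate. Consider the linear system for $\delta\bar{\mathbf x},\delta\bar{\mathbf y}\in\mathbb{R}^{Nd}$: $$\delta\dot{\bar{\mathbf x}}=\big[I_N\otimes\big(JF_1(\mathbf x_s)+\epsilon d^{[1]}(JG^{[1]}(\mathbf x_s,\mathbf x_s)+DG^{[1]}(\mathbf x_s,\mathbf x_s))+\lambda e\,JH_1(\mathbf x_s,\mathbf y_s)\big)-\epsilon\,\bar{\mathscr L}\otimes DG^{[1]}(\mathbf x_s,\mathbf x_s)\big]\delta\bar{\mathbf x}+\lambda\,(\mathscr B\otimes DH_1(\mathbf x_s,\mathbf y_s))\,\delta\bar{\mathbf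 y},$$ $$\delta\dot{\bar{\mathbf y}}=\big[I_N\otimes\big(JF_2(\mathbf y_s)+\epsilon d^{[1]}(JG^{[2]}(\mathbf y_s,\mathbf y_s)+DG^{[2]}(\mathbf y_s,\mathbf y_s))+\lambda e\,JH_2(\mathbf y_s,\mathbf x_s)\big)-\epsilon\,\bar{\mathscr L}\otimes DG^{[2]}(\mathbf y_s,\mathbf y_s)\big]\delta\bar{\mathbf y}+\lambda\,(\mathscr B\otimes DH_2(\mathbf y_s,\mathbf x_s))\,\delta\bar{\mathbf x}.$$ Let $e,\Gamma_2,\dots,\Gamma_N$ be the eigenvalues of $\mathscr B$, where $e$ corresponds to the eigenvector $\mathbf 1=(1,\dots,1)^{tr}$. Then there is an orthogonal matrix $V\in\mathbb{R}^{N\times N}$ with first column $\mathbf 1/\sqrt N$ such that, writing $\eta^{(\bar{\mathbf x})}=(V\otimes I_d)^{tr}\delta\bar{\mathbf x}$ and $\eta^{(\bar{\mathbf y})}=(V\otimes I_d)^{tr}\delta\bar{\mathbf y}$ with $d$-dimensional blocks $\eta^{(\bar{\mathbf x})}_{i},\eta^{(\bar{\mathbf y})}_{i}$, $i=1,\dots,N$, each pair $(\eta^{(\bar{\mathbf x})}_{i},\eta^{(\bar{\mathbf y})}_{i})$ for $i=2,\dots,N$ satisfies the closed $2d$-dimensional system $$\dot\eta^{(\bar{\mathbf x})}_{i}=\big[JF_1(\mathbf x_s)+\epsilon d^{[1]}(JG^{[1]}+DG^{[1]})(\mathbf x_s,\mathbf x_s)-\epsilon\gamma\,DG^{[1]}(\mathbf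 x_s,\mathbf x_s)+\lambda e\,JH_1(\mathbf x_s,\mathbf y_s)\big]\eta^{(\bar{\mathbf x})}_{i}+\lambda\Gamma_i\,DH_1(\mathbf x_s,\mathbf y_s)\eta^{(\bar{\mathbf y})}_{i},$$ $$\dot\eta^{(\bar{\mathbf y})}_{i}=\big[JF_2(\mathbf y_s)+\epsilon d^{[1]}(JG^{[2]}+DG^{[2]})(\mathbf y_s,\mathbf y_s)-\epsilon\gamma\,DG^{[2]}(\mathbf y_s,\mathbf y_s)+\lambda e\,JH_2(\mathbf y_s,\mathbf x_s)\big]\eta^{(\bar{\mathbf y})}_{i}+\lambda\Gamma_i\,DH_2(\mathbf y_s,\mathbf x_s)\eta^{(\bar{\mathbf x})}_{i},$$ i.e. the $2d(N-1)$-dimensional transverse error system decouples into $N-1$ independent $2d$-dimensional linear systems.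
   Context: This is the linearization, about an intralayer synchronous solution $(\mathbf x_s,\mathbf y_s)$, of a two-layer network with a single intralayer connection type (tier), with time-averaged intralayer Laplacian $\bar{\mathscr L}$ (identical in both layers), common interlayer adjacency $\mathscr B^{[1]}=\mathscr B^{[2]}=\mathscr B$ with constant interlayer degree $e$, constant intralayer degree $d^{[1]}$, intralayer coupling strength $\epsilon$ and interlayer coupling strength $\lambda$. The pair $(\eta^{(\bar{\mathbf x})}_1,\eta^{(\bar{\mathbf y})}_1)$ describes the mode parallel to the synchronization manifold, and the pairs with $i\ge2$ the transverse modes. *)

From HB Require Import structures.
From mathcomp Require Import all_boot all_order all_algebra.
From mathcomp Require Import mxtens.
From mathcomp Require Import all_classical all_reals all_analysis.
Set Implicit Arguments. Unset Strict Implicit. Unset Printing Implicit Defensive.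
Import Order.TTheory GRing.Theory Num.Theory.
Import numFieldNormedType.Exports.
Local Open Scope ring_scope.

(* Kronecker product: [tensmx A B] (notation A *t B) from mathcomp real_closed
   mxtens; row/column index (i,k) of A *t B is [mxtens_index (i,k)] = i*p + k,
   i.e. the usual block ordering of the Kronecker product. *)

(* The library's [jacobian f p] acts on row vectors (u *m 'J f p = df_p(u)),
   so the usual Jacobian is its transpose. *)
Definition Jc (R : realType) n m (f : 'rV[R]_n -> 'rV[R]_m) (p : 'rV[R]_n)
  : 'M[R]_(m, n) := (jacobian f p)^T.

(* partial Jacobians of G : R^d x R^d -> R^d w.r.t. first (J) and second (D)
   argument, at (u, v) *)
Definition J1 (R : realType) d (G : 'rV[R]_d -> 'rV[R]_d -> 'rV[R]_d) u v :=
  Jc (fun w => G w v) u.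
Definition J2 (R : realType) d (G : 'rV[R]_d -> 'rV[R]_d -> 'rV[R]_d) u v :=
  Jc (G u) v.

Definition C1 (R : realType) n m (f : 'rV[R]_n -> 'rV[R]_m) : Prop :=
  (forall p, differentiable f p) /\ continuous (fun p => jacobian f p).

Definition C1_2 (R : realType) d (G : 'rV[R]_d -> 'rV[R]_d -> 'rV[R]_d) : Prop :=
  C1 (fun z : 'rV[R]_(d + d) => G (lsubmx z) (rsubmx z)).

Definition blk (R : realType) N d (i : 'I_N) (v : 'cV[R]_(N * d)) : 'cV[R]_d :=
  \col_(k < d) v (mxtens_index (i, k)) 0.

(* The matrix B is symmetric and has the unit vector u = 1/sqrt N as an
   eigenvector for the eigenvalue e, so the real spectral theorem (by Householder
   deflation) yields an orthogonal V with first column u and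
   V^T B V = diag (e, Gam_2, ..., Gam_N).  The Laplacian L is symmetric with
   spectrum {0, gamma, ..., gamma} and L u = 0, hence L = gamma (I - u u^T), and
   the same V gives V^T L V = diag (0, gamma, ..., gamma).  Conjugating by
   V (x) I_d turns every Kronecker coefficient X (x) Y of the linearized system
   into (V^T X V) (x) Y with V^T X V diagonal, so the i-th d-blocks of
   eta^x and eta^y only see each other; the derivative commutes with the
   constant linear map w |-> blk_i ((V (x) I_d)^T w). *)

From HB Require Import structures.
From mathcomp Require Import all_boot all_order all_algebra.
From mathcomp Require Import mxtens.
From mathcomp Require Import all_classical all_reals all_analysis.
From mathcomp Require Import ring.
Import Order.TTheory GRing.Theory Num.Theory.
Import numFieldNormedType.Exports.
Set Implicit Arguments.
Unset Strict Implicit.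
Unset Printing Implicit Defensive.
Local Open Scope ring_scope.

Local Notation dot x y := ((x^T *m y) 0 0).

Section Reflection.
Variable R : realFieldType.

Lemma dotmx_scalar n (x y : 'cV[R]_n) : x^T *m y = (dot x y)%:M.
Proof. exact: mx11_scalar. Qed.

Lemma dotmx_eq0 n (x : 'cV[R]_n) : (dot x x == 0) = (x == 0).
Proof.
apply/idP/eqP => [|->]; last by rewrite mulmx0 mxE.
rewrite mxE psumr_eq0 => [/allP x0|k _]; last by rewrite mxE -expr2 sqr_ge0.
apply/matrixP => k j; rewrite [j]ord1 !mxE.
by have := x0 k (mem_index_enum k); rewrite mxE -expr2 sqrf_eq0 => /eqP.
Qed.

Lemma dotmx_ge0 n (x : 'cV[R]_n) : 0 <= dot x x.
Proof. by rewrite mxE; apply: sumr_ge0 => k _; rewrite mxE -expr2 sqr_ge0. Qed.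

(* For [w = 0] this is the identity, as [2 / 0 = 0]. *)
Definition reflectmx n (w : 'cV[R]_n) : 'M[R]_n :=
  1%:M - (2 / dot w w) *: (w *m w^T).

Lemma trmx_reflectmx n (w : 'cV[R]_n) : (reflectmx w)^T = reflectmx w.
Proof. by rewrite /reflectmx linearB /= linearZ /= trmx_mul trmxK trmx1. Qed.

Lemma reflectmx_orthogonal n (w : 'cV[R]_n) :
  (reflectmx w)^T *m reflectmx w = 1%:M.
Proof.
set c := 2 / dot w w.
have wwT_sq : w *m w^T *m (w *m w^T) = dot w w *: (w *m w^T).
  by rewrite mulmxA -(mulmxA w) {1}dotmx_scalar mul_mx_scalar -scalemxAl.
have cc : c * c * dot w w = c + c.
  rewrite /c; have [->|w0] := eqVneq (dot w w) 0; first by rewrite invr0 !mulr0 addr0.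
  by field.
rewrite trmx_reflectmx /reflectmx -/c.
rewrite mulmxBl mul1mx mulmxBr mulmx1 -!scalemxAl -!scalemxAr wwT_sq !scalerA cc.
by rewrite scalerDl opprB addrK subrK.
Qed.

Lemma trmx_mx11 (A : 'M[R]_1) : A^T = A.
Proof. by rewrite [A]mx11_scalar tr_scalar_mx. Qed.

Lemma reflectmx_swap n (x y : 'cV[R]_n) :
  x^T *m x = y^T *m y -> reflectmx (x - y) *m x = y.
Proof.
move=> xxyy; set w := x - y.
have [w0|w_neq0] := eqVneq w 0.
  rewrite /reflectmx w0 mul0mx scaler0 subr0 mul1mx.
  by apply/eqP; rewrite -subr_eq0 -/w w0.
have ww : dot w w = 2 * dot w x.
  have yx : y^T *m x = x^T *m y by rewrite -[LHS]trmx_mx11 trmx_mul trmxK.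
  have wT : w^T = x^T - y^T by rewrite linearB.
  rewrite wT !mulmxBl /w !mulmxBr -xxyy yx.
  by move: (x^T *m x) (x^T *m y) => a b; rewrite !mxE; ring.
have wx_neq0 : dot w x != 0.
  by apply: contraNneq w_neq0; rewrite -dotmx_eq0 ww => ->; rewrite mulr0.
rewrite /reflectmx mulmxBl mul1mx -scalemxAl -mulmxA [w^T *m x]dotmx_scalar.
rewrite mul_mx_scalar scalerA.
have -> : 2 / dot w w * dot w x = 1 by rewrite ww; field.
by rewrite scale1r /w opprB addrC subrK.
Qed.

End Reflection.

Section Spectral.
Variable R : rcfType.
Local Notation e0 := (delta_mx 0 0).

Lemma delta_mx11 : delta_mx 0 0 = 1%:M :> 'M[R]_1.
Proof. by apply/matrixP => i j; rewrite [i]ord1 [j]ord1 !mxE. Qed.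

Lemma orthogonal_mul n (V W : 'M[R]_n) :
  V^T *m V = 1%:M -> W^T *m W = 1%:M -> (V *m W)^T *m (V *m W) = 1%:M.
Proof. by move=> VV WW; rewrite trmx_mul mulmxA -(mulmxA W^T) VV mulmx1 WW. Qed.

Lemma orthogonal_conj_inj n (V A B : 'M[R]_n) : V^T *m V = 1%:M ->
  V^T *m A *m V = V^T *m B *m V -> A = B.
Proof.
move=> VV AB; have VV' := mulmx1C VV.
by rewrite -[A]mul1mx -[B]mul1mx -VV' -[A]mulmx1 -[B]mulmx1 -VV' !mulmxA -!(mulmxA V) AB.
Qed.

Lemma char_poly_orthogonal_conj n (V A : 'M[R]_n) : V^T *m V = 1%:M ->
  char_poly (V^T *m A *m V) = char_poly A.
Proof.
move=> VV; rewrite /char_poly /char_poly_mx.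
have -> : 'X%:M - map_mx polyC (V^T *m A *m V) =
    map_mx polyC V^T *m ('X%:M - map_mx polyC A) *m map_mx polyC V.
  rewrite mulmxBr mulmxBl mul_mx_scalar -scalemxAl -map_mxM VV map_mx1 scalemx1.
  by rewrite !map_mxM.
by rewrite !det_mulmx mulrAC -det_mulmx -map_mxM VV map_mx1 det1 mul1r.
Qed.

Lemma char_poly_block_scalar n (a : R) (A : 'M[R]_n) :
  char_poly (block_mx (a%:M : 'M[R]_1) 0 0 A) = ('X - a%:P) * char_poly A.
Proof.
by rewrite /char_poly char_block_diag_mx det_ublock det_mx11 !mxE !eqxx /= !mulr1n.
Qed.

Lemma sym_unit_eigenvector n (A : 'M[R]_n) a : A^T = A ->
  root (char_poly A) a -> exists2 u : 'cV_n, u^T *m u = 1%:M & A *m u = a *: u.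
Proof.
move=> AT; rewrite -eigenvalue_root_char => /eigenvalueP[v vA v_neq0].
set z := v^T; set k := (Num.sqrt (dot z z))^-1.
have Az : A *m z = a *: z by rewrite -{1}AT -trmx_mul vA linearZ.
have zz_gt0 : 0 < dot z z by rewrite lt_def dotmx_ge0 dotmx_eq0 trmx_eq0 v_neq0.
exists (k *: z); last by rewrite -scalemxAr Az !scalerA mulrC.
rewrite -scalemxAr [(k *: z)^T]linearZ /= -scalemxAl scalerA dotmx_scalar.
by rewrite scale_scalar_mx -invfM -expr2 sqr_sqrtr ?ltW // mulVf ?gt_eqF.
Qed.

Lemma orthogonal_conj_eigen_block n (A H : 'M[R]_n.+1) a :
  A^T = A -> H^T *m H = 1%:M ->
  A *m (H *m (e0 : 'cV_n.+1)) = a *: (H *m (e0 : 'cV_n.+1)) ->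
  let M : 'M[R]_(1 + n) := H^T *m A *m H in
  M = block_mx (a%:M : 'M[R]_1) 0 0 (drsubmx M).
Proof.
move=> AT HH AHe0 M.
have MT : M^T = M by rewrite /M !trmx_mul trmxK AT mulmxA.
have Me0 : M *m (e0 : 'cV_(1 + n)) = a *: e0.
  by rewrite /M -!mulmxA AHe0 -scalemxAr mulmxA HH mul1mx.
have Mi0 i : M i 0 = a * (i == 0)%:R.
  by have /matrixP/(_ i 0) := Me0; rewrite -colE !mxE andbT.
clearbody M.
have l0 : lshift n (0 : 'I_1) = 0 by apply: val_inj.
have dl0 : dlsubmx M = 0.
  by apply/matrixP => i j; rewrite [j]ord1 !mxE l0 Mi0 mulr0.
have ul : ulsubmx M = a%:M.
  by apply/matrixP => i j; rewrite [i]ord1 [j]ord1 !mxE l0 Mi0 mulr1.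
have ur : ursubmx M = 0 by rewrite -[ursubmx M]trmxK trmx_ursub MT dl0 trmx0.
by rewrite -[LHS]submxK ul ur dl0.
Qed.

Lemma orthogonal_block1 n (V : 'M[R]_n) : V^T *m V = 1%:M ->
  (block_mx (1%:M : 'M[R]_1) 0 0 V)^T *m block_mx (1%:M : 'M[R]_1) 0 0 V = 1%:M.
Proof.
move=> VV; rewrite tr_block_mx !trmx0 trmx1 mulmx_block VV.
by rewrite !(mulmx0, mul0mx, mulmx1, addr0, add0r) -scalar_mx_block.
Qed.

Lemma block1_mul_delta0 n (V : 'M[R]_n) :
  block_mx (1%:M : 'M[R]_1) 0 0 V *m (e0 : 'cV_(1 + n)) = e0.
Proof.
have e0E : (e0 : 'cV_(1 + n)) = col_mx (e0 : 'M[R]_1) 0.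
  by rewrite -delta_mx_ushift; congr delta_mx; apply: val_inj.
by rewrite e0E mul_block_col !(mulmx0, mul0mx, mul1mx, addr0, add0r).
Qed.

Lemma block_scalar_diag n (c : 'I_n.+1 -> R) :
  block_mx ((c 0)%:M : 'M[R]_1) 0 0 (diag_mx (\row_i c (lift 0 i)))
  = diag_mx (\row_i c i).
Proof.
have -> : (\row_i c i : 'rV_(1 + n)) = row_mx (\row_(i < 1) c 0) (\row_i c (lift 0 i)).
  apply/matrixP => i j; rewrite [i]ord1 !mxE; case: splitP => k jk; rewrite !mxE.
    by congr c; apply: val_inj; rewrite /= jk [k]ord1.
  by congr c; apply: val_inj; rewrite /= jk.
rewrite (@diag_mx_row _ n 1); congr block_mx.
by apply/matrixP => i j; rewrite [i]ord1 [j]ord1 !mxE.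
Qed.

Theorem sym_spectral n (A : 'M[R]_n.+1) (c : 'I_n.+1 -> R) (u : 'cV[R]_n.+1) :
  A^T = A -> char_poly A = \prod_i ('X - (c i)%:P) ->
  u^T *m u = 1%:M -> A *m u = c 0 *: u ->
  exists V : 'M[R]_n.+1,
    [/\ V^T *m V = 1%:M, V *m e0 = u & V^T *m A *m V = diag_mx (\row_i c i)].
Proof.
elim: n A c u => [|n IH] A c u AT cpA uu Au.
  rewrite delta_mx11.
  exists u; split; rewrite ?mulmx1 // -mulmxA Au -scalemxAr uu scalemx1.
  by apply/matrixP => i j; rewrite [i]ord1 [j]ord1 !mxE.
set H := reflectmx (e0 - u).
have HH : H^T *m H = 1%:M := reflectmx_orthogonal _.
have He0 : H *m e0 = u.
  by apply: reflectmx_swap; rewrite uu trmx_delta mul_delta_mx delta_mx11.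
set A' := drsubmx (H^T *m A *m H : 'M[R]_(1 + n.+1)).
have Mblk : H^T *m A *m H = block_mx ((c 0)%:M : 'M[R]_1) 0 0 A'.
  by apply: orthogonal_conj_eigen_block; rewrite ?He0.
have A'T : A'^T = A' by rewrite /A' trmx_drsub !trmx_mul trmxK AT mulmxA.
have cpA' : char_poly A' = \prod_(i < n.+1) ('X - (c (lift 0 i))%:P).
  apply: (@mulfI _ ('X - (c 0)%:P)); first by rewrite polyXsubC_eq0.
  rewrite -char_poly_block_scalar -Mblk char_poly_orthogonal_conj //.
  by rewrite cpA [LHS]big_ord_recl.
have [u' u'u' Au'] :
    exists2 u' : 'cV_n.+1, u'^T *m u' = 1%:M & A' *m u' = c (lift 0 0) *: u'.
  by apply: sym_unit_eigenvector; rewrite // cpA' big_ord_recl rootM root_XsubC eqxx.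
have [V' [V'V' V'e0 V'A'V']] := IH A' _ u' A'T cpA' u'u' Au'.
exists (H *m block_mx (1%:M : 'M[R]_1) 0 0 V'); split.
- exact: orthogonal_mul HH (orthogonal_block1 V'V').
- by rewrite -mulmxA block1_mul_delta0.
- rewrite trmx_mul !mulmxA -(mulmxA _ H^T) -(mulmxA _ _ H) Mblk.
  rewrite (@tr_block_mx _ 1 n.+1 1 n.+1) !trmx0 trmx1.
  rewrite !(@mulmx_block _ 1 n.+1 1 n.+1 1 n.+1).
  rewrite !(mulmx0, mul0mx, mulmx1, mul1mx, addr0, add0r) V'A'V'.
  exact: block_scalar_diag.
Qed.

Lemma orthogonal_conj_proj_compl n (W : 'M[R]_n.+1) (g : R) : W^T *m W = 1%:M ->
  W^T *m (g *: (1%:M - (W *m (e0 : 'cV_n.+1)) *m (W *m e0)^T)) *m W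
  = diag_mx (\row_j (g *+ (j != 0))).
Proof.
move=> WW; rewrite -scalemxAr -scalemxAl mulmxBr mulmxBl mulmx1 WW trmx_mul.
rewrite !mulmxA WW mul1mx -!mulmxA WW mulmx1 trmx_delta mul_delta_mx.
apply/matrixP => i j; rewrite !mxE.
have [<-|ij] := eqVneq i j.
  by case: eqP; rewrite ?andbT ?subrr ?subr0 ?mulr0 ?mulr1.
have [i0|_] := eqVneq i 0; last by rewrite /= subrr mulr0 mulr0n.
by rewrite i0 eq_sym in ij; rewrite /= (negbTE ij) subrr mulr0 mulr0n.
Qed.

Lemma sym_conj_two_eigenvalues n (A W : 'M[R]_n.+1) (g : R) :
  A^T = A -> char_poly A = 'X * ('X - g%:P) ^+ n ->
  W^T *m W = 1%:M -> A *m (W *m (e0 : 'cV_n.+1)) = 0 ->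
  W^T *m A *m W = diag_mx (\row_j (g *+ (j != 0))).
Proof.
move=> AT cpA WW AWe0; set u := W *m (e0 : 'cV_n.+1).
have uu : u^T *m u = 1%:M.
  rewrite trmx_mul mulmxA -(mulmxA _ W^T) WW mulmx1.
  by rewrite trmx_delta mul_delta_mx delta_mx11.
have cpA' : char_poly A = \prod_(i < n.+1) ('X - (g *+ (i != 0))%:P).
  rewrite cpA big_ord_recl /= subr0 -[X in _ ^+ X](card_ord n) -prodr_const.
  by congr (_ * _); apply: eq_bigr => i _; rewrite neq_lift.
have Au : A *m u = g *+ (0 != 0 :> 'I_n.+1) *: u by rewrite AWe0 scale0r.
have [U [UU Ue0 UAU]] := sym_spectral AT cpA' uu Au.
suff -> : A = g *: (1%:M - u *m u^T) by apply: orthogonal_conj_proj_compl.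
by apply: (orthogonal_conj_inj UU); rewrite UAU -Ue0 orthogonal_conj_proj_compl.
Qed.

End Spectral.

Lemma mulmx_const_rowsum (R : pzRingType) n (A : 'M[R]_n) (a k : R) :
  (forall i, \sum_j A i j = a) -> A *m const_mx k = a *: (const_mx k : 'cV_n).
Proof.
move=> rowsum; apply/matrixP => i j; rewrite !mxE -(rowsum i) mulr_suml.
by apply: eq_bigr => l _; rewrite mxE.
Qed.

Lemma const_mx_unit (R : rcfType) n : (0 < n)%N ->
  let u : 'cV[R]_n := const_mx (Num.sqrt n%:R)^-1 in u^T *m u = 1%:M.
Proof.
move=> n_gt0 u; have n_pos : (0 : R) < n%:R by rewrite ltr0n.
apply/matrixP => i j; rewrite [i]ord1 [j]ord1 !mxE eqxx.
under eq_bigr do rewrite !mxE.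
rewrite sumr_const card_ord -invfM -expr2 sqr_sqrtr ?ltW // -[_ *+ n]mulr_natr.
by rewrite mulVf // gt_eqF.
Qed.

Section MatrixDerivative.
Variables (R : numFieldType) (V : normedModType R).
Local Open Scope classical_set_scope.

Lemma mulmx_continuous m n p (P : 'M[R]_(m, n)) :
  continuous (fun w : 'M[R]_(n, p) => P *m w).
Proof.
have -> : (fun w : 'M[R]_(n, p) => P *m w) =
    (fun w => \sum_i \sum_j w i j *: (P *m delta_mx i j)).
  apply/funext => w; rewrite {1}[w]matrix_sum_delta mulmx_sumr.
  by apply: eq_bigr => i _; rewrite mulmx_sumr; apply: eq_bigr => j _; rewrite scalemxAr.
apply: continuous_big => [|i _]; first exact: add_continuous.
apply: continuous_big => [|j _ w]; first exact: add_continuous.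
by apply: continuousZr_tmp; apply: coord_continuous.
Qed.

Lemma is_derive_mulmx m n p (P : 'M[R]_(m, n)) (g : V -> 'M[R]_(n, p)) x v dg :
  is_derive x v g dg -> is_derive x v (fun y => P *m g y) (P *m dg).
Proof.
case=> g_derivable <-.
have quotientE : (fun h : R => h^-1 *: (P *m g (h *: v + x) - P *m g x)) =
    (fun w => P *m w) \o (fun h : R => h^-1 *: (g (h *: v + x) - g x)).
  by apply/funext => h /=; rewrite -mulmxBr scalemxAr.
have g_cvg : (fun h : R => h^-1 *: (g (h *: v + x) - g x)) @ 0^' --> 'D_v g x
  := g_derivable.
have Pg_cvg : (fun h : R => h^-1 *: (P *m g (h *: v + x) - P *m g x)) @ 0^'
    --> P *m 'D_v g x.
  by rewrite quotientE; apply: continuous_cvg g_cvg; exact: mulmx_continuous.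
apply: DeriveDef; last exact: cvg_lim Pg_cvg.
by apply/cvg_ex; exists (P *m 'D_v g x).
Qed.

End MatrixDerivative.

Section BlockCoordinates.
Variable R : realType.

Definition blk_selmx N d (i : 'I_N) : 'M[R]_(d, N * d) :=
  \matrix_(k, J) (J == mxtens_index (i, k))%:R.

Lemma blkE N d (i : 'I_N) (w : 'cV[R]_(N * d)) : blk i w = blk_selmx d i *m w.
Proof.
apply/matrixP => k z; rewrite [z]ord1 !mxE (bigD1 (mxtens_index (i, k))) //=.
rewrite mxE eqxx mul1r big1 ?addr0 // => J /negbTE J_neq.
by rewrite mxE J_neq mul0r.
Qed.

Lemma is_derive_blk (V : normedModType R) N d m (i : 'I_N) (P : 'M[R]_(N * d, m))
    (f : V -> 'cV[R]_m) x v df :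
  is_derive x v f df ->
  is_derive x v (fun y => blk i (P *m f y)) (blk i (P *m df)).
Proof.
move=> f_derive; rewrite blkE mulmxA.
have -> : (fun y => blk i (P *m f y)) = (fun y => blk_selmx d i *m P *m f y).
  by apply/funext => y; rewrite blkE mulmxA.
exact: is_derive_mulmx.
Qed.

Lemma sum_mxtens_index N d (F : 'I_(N * d) -> R) :
  \sum_J F J = \sum_(j < N) \sum_(l < d) F (mxtens_index (j, l)).
Proof.
rewrite pair_big (reindex (@mxtens_index N d)) /=; last first.
  by exists (@mxtens_unindex N d) => p _; [apply: mxtens_indexK | apply: mxtens_unindexK].
by apply: eq_bigr => -[j l].
Qed.

Lemma blk_tens_diag N d (r : 'rV[R]_N) (Y : 'M[R]_d) (w : 'cV[R]_(N * d)) i :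
  blk i ((diag_mx r *t Y) *m w) = r 0 i *: (Y *m blk i w).
Proof.
apply/matrixP => k z; rewrite [z]ord1 !mxE sum_mxtens_index.
rewrite (bigD1 i) //= [X in _ + X]big1 ?addr0 => [|j ji]; last first.
  by apply: big1 => l _; rewrite tensmxE mxE eq_sym (negbTE ji) mulr0n !mul0r.
rewrite mulr_sumr; apply: eq_bigr => l _.
by rewrite tensmxE !mxE eqxx mulr1n mulrA.
Qed.

Lemma tens_orthogonal_conj N d (V X : 'M[R]_N) (Y : 'M[R]_d) : V *m V^T = 1%:M ->
  (V *t (1%:M : 'M[R]_d))^T *m (X *t Y)
  = ((V^T *m X *m V) *t Y) *m (V *t (1%:M : 'M[R]_d))^T.
Proof.
move=> VV; rewrite trmx_tens trmx1 !tensmx_mul mulmx1 mul1mx.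
by rewrite -[V^T *m X *m V *m V^T]mulmxA VV mulmx1.
Qed.

Lemma blk_transverse N d (V L B : 'M[R]_N) (rL rB : 'rV[R]_N) :
  V^T *m V = 1%:M -> V^T *m L *m V = diag_mx rL -> V^T *m B *m V = diag_mx rB ->
  forall (A DG DH : 'M[R]_d) (eps lam : R) (i : 'I_N) (x y : 'cV[R]_(N * d)),
  let P := (V *t (1%:M : 'M[R]_d))^T in
  blk i (P *m ((1%:M *t A - eps *: (L *t DG)) *m x + lam *: (B *t DH) *m y))
  = (A - (eps * rL 0 i) *: DG) *m blk i (P *m x) + (lam * rB 0 i) *: (DH *m blk i (P *m y)).
Proof.
move=> VV VLV VBV A DG DH eps lam i x y P; have VV' := mulmx1C VV.
rewrite mulmxDr !mulmxA mulmxBr -!scalemxAr !tens_orthogonal_conj // mulmx1 VV VLV VBV.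
rewrite -diag_const_mx mulmxBl -!scalemxAl -!mulmxA.
rewrite blkE mulmxDr mulmxBr -!scalemxAr -!blkE !blk_tens_diag mxE -/P.
by rewrite scale1r mulmxBl -scalemxAl !scalerA.
Qed.

End BlockCoordinates.

Theorem mainTheorem2 (R : realType) (N d : nat) (hN : (2 <= N)%N) (hd : (0 < d)%N)
  (L B : 'M[R]_N) (gamma e : R) (Gam : 'I_N -> R)
  (eps lam d1 : R) (xs ys : R -> 'rV[R]_d)
  (F1 F2 : 'rV[R]_d -> 'rV[R]_d)
  (G1 G2 H1 H2 : 'rV[R]_d -> 'rV[R]_d -> 'rV[R]_d) :
  (* intralayer Laplacian *)
  L^T = L ->
  (forall i, \sum_(j < N) L i j = 0) ->
  gamma != 0 ->
  char_poly L = 'X * ('X - gamma%:P) ^+ (N - 1) ->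
  (* interlayer adjacency *)
  B^T = B ->
  (forall i, \sum_(j < N) B i j = e) ->
  char_poly B = \prod_(i < N) ('X - (Gam i)%:P) ->
  (forall i : 'I_N, nat_of_ord i = 0%N -> Gam i = e) ->
  (* regularity *)
  C1 F1 -> C1 F2 -> C1_2 G1 -> C1_2 G2 -> C1_2 H1 -> C1_2 H2 ->
  exists V : 'M[R]_N,
    V^T *m V = 1%:M /\
    (forall k j : 'I_N, nat_of_ord j = 0%N -> V k j = (Num.sqrt (N%:R))^-1) /\
    forall dx dy : R -> 'cV[R]_(N * d),
      (forall t, is_derive (t : R) (1 : R) dx
         (((1%:M : 'M[R]_N) *t
             (Jc F1 (xs t)
              + (eps * d1) *: (J1 G1 (xs t) (xs t) + J2 G1 (xs t) (xs t))
              + (lam * e) *: J1 H1 (xs t) (ys t))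
           - eps *: (L *t J2 G1 (xs t) (xs t))) *m dx t
          + lam *: (B *t J2 H1 (xs t) (ys t)) *m dy t)) ->
      (forall t, is_derive (t : R) (1 : R) dy
         (((1%:M : 'M[R]_N) *t
             (Jc F2 (ys t)
              + (eps * d1) *: (J1 G2 (ys t) (ys t) + J2 G2 (ys t) (ys t))
              + (lam * e) *: J1 H2 (ys t) (xs t))
           - eps *: (L *t J2 G2 (ys t) (ys t))) *m dy t
          + lam *: (B *t J2 H2 (ys t) (xs t)) *m dx t)) ->
      forall i : 'I_N, (0 < i)%N ->
        let etax := fun t => blk i ((V *t (1%:M : 'M[R]_d))^T *m dx t) in
        let etay := fun t => blk i ((V *t (1%:M : 'M[R]_d))^T *m dy t) in
        forall t,
          is_derive (t : R) (1 : R) etax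
            ((Jc F1 (xs t)
              + (eps * d1) *: (J1 G1 (xs t) (xs t) + J2 G1 (xs t) (xs t))
              - (eps * gamma) *: J2 G1 (xs t) (xs t)
              + (lam * e) *: J1 H1 (xs t) (ys t)) *m etax t
             + (lam * Gam i) *: (J2 H1 (xs t) (ys t) *m etay t))
          /\
          is_derive (t : R) (1 : R) etay
            ((Jc F2 (ys t)
              + (eps * d1) *: (J1 G2 (ys t) (ys t) + J2 G2 (ys t) (ys t))
              - (eps * gamma) *: J2 G2 (ys t) (ys t)
              + (lam * e) *: J1 H2 (ys t) (xs t)) *m etay t
             + (lam * Gam i) *: (J2 H2 (ys t) (xs t) *m etax t)).
Proof.
case: N hN L B Gam => [//|n] _ L B Gam LT Lsum _ cpL BT Bsum cpB Gam0 _ _ _ _ _ _.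
have uu := @const_mx_unit R n.+1 isT.
set u := const_mx _ in uu.
have Lu : L *m u = 0 by rewrite (mulmx_const_rowsum _ Lsum) scale0r.
have Bu : B *m u = Gam 0 *: u by rewrite (mulmx_const_rowsum _ Bsum) Gam0.
have [V [VV Ve0 VBV]] := sym_spectral BT cpB uu Bu.
have VLV : V^T *m L *m V = diag_mx (\row_j (gamma *+ (j != 0))).
  by apply: sym_conj_two_eigenvalues; rewrite ?Ve0 // cpL subn1.
exists V; split => //; split.
  move=> k j /(@ord_inj n.+1 j 0) ->.
  by have /matrixP/(_ k 0) := Ve0; rewrite -colE !mxE.
move=> dx dy dx_eq dy_eq i i_gt0 etax etay t.
have rLi : (\row_j (gamma *+ (j != 0))) 0 i = gamma by rewrite mxE -lt0n i_gt0.
have rBi : (\row_j Gam j) 0 i = Gam i by rewrite mxE.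
split.
- apply: is_derive_eq (is_derive_blk i _ (dx_eq t)) _.
  by rewrite (blk_transverse VV VLV VBV) rLi rBi addrAC.
- apply: is_derive_eq (is_derive_blk i _ (dy_eq t)) _.
  by rewrite (blk_transverse VV VLV VBV) rLi rBi addrAC.
Qed.
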